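(* With the notation of the context, the $\bm\phi$-twisted exterior derivative satisfies $\hat d\circ\hat d=0$.
   Context: $\mathfrak{g}$ is an $n$-dimensional Lie algebra over a field $\bm k$ of characteristic zero with basis $\hat x_1,\dots,\hat x_n$ and $U(\mathfrak{g})$ its enveloping algebra; $S(\mathfrak{g})=\bm k[x_1,\dots,x_n]$; $\hat S(\mathfrak{g}^* )=\bm k[[\partial^1,\dots,\partial^n]]$. $\bm\phi:\mathfrak{g}\to\operatorname{Der}(\hat S(\mathfrak{g}^* ))$ is a Lie algebra homomorphism with $\phi^j_i:=\bm\phi(-\hat x_i)(\partial^j)$ such that $(\phi^j_i)$ reduces to the identity when all $\partial^j=0$. $\hat A_{n,\bm k}$ is the semicompleted Weyl algebra (underlying space $S(\mathfrak{g})\otimes\hat S(\mathfrak{g}^* )$, relations $[\partial^i,x_j]=\delta^i_j$), acting on $S(\mathfrak{g})$ with $x_j$ by multiplication and $\partial^j$ by $\partial/\partial x_j$. The algebra map $U(\mathfrak{g})\to\hat A_{n,\bm k}$, $u\mapsto u^\phi$, is determined by $\hat x_i\mapsto\sum_j x_j\phi^j_i$; $u\mapsto u^\phi\triangleright1$ is a linear bijection $U(\mathfrak{g})\to S(\mathfrak{g})$ with inverse $\xi$, and $\hat\partial^j:=\xi\circ\frac{\partial}{\partial x_j}\circ\xi^{-1}$. $\Lambda^*(\mathfrak{g})$ is the exterior algebra on generators $dx_1,\dots,dx_n$. The twisted exterior derivative $\hat d$ is the linear operator on $\Lambda^*(\mathfrak{g})\otimes U(\mathfrak{g})\otimes\hat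 S(\mathfrak{g}^* )$ (the underlying space of the algebra $\Lambda^*(\mathfrak{g})\otimes(U(\mathfrak{g})\sharp\hat S(\mathfrak{g}^* ))$) given by $\hat d(\omega\otimes u\otimes P)=\sum_j(dx_j\wedge\omega)\otimes\hat\partial^j(u)\otimes P$; equivalently $\hat d=\sum_{k,j}d\hat x_k(\phi^{-1})^k_j\hat\partial^j$ with $d\hat x_k=\sum_j dx_j\phi^j_k$. *)

(* with multinomials' mpoly for S(g) = k[x_1..x_n]. *)
From HB Require Import structures.
From mathcomp Require Import all_boot all_order all_algebra.
From mathcomp Require Import mpoly.
Set Implicit Arguments. Unset Strict Implicit. Unset Printing Implicit Defensive.
Import Order.TTheory GRing.Theory.
Local Open Scope ring_scope.

Section Twisted.
Variables (n : nat) (k : fieldType).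

(* ---------- The Lie algebra g, given by structure constants in the basis
   xhat_1..xhat_n : [xhat_i, xhat_j] = sum_l c i j l xhat_l. ---------- *)
Definition is_lie_structure (c : 'I_n -> 'I_n -> 'I_n -> k) : Prop :=
  (forall i j l, c i j l = - c j i l) /\
  (forall i j l p,
     \sum_(m < n) (c i j m * c m l p + c j l m * c m i p + c l i m * c m j p)
     = 0).

(* f : basis -> B extends to a Lie algebra map g -> B (B with commutator). *)
Definition lie_rel (c : 'I_n -> 'I_n -> 'I_n -> k) (B : algType k)
  (f : 'I_n -> B) : Prop :=
  forall i j, f i * f j - f j * f i = \sum_(l < n) c i j l *: f l.

Definition is_alg_morph (A B : algType k) (g : A -> B) : Prop :=
  [/\ forall a b, g (a + b) = g a + g b,
      forall (x : k) a, g (x *: a) = x *: g a,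
      forall a b, g (a * b) = g a * g b & g 1 = 1].

(* (U, xh) is the universal enveloping algebra U(g), xh i the image of xhat_i. *)
Definition is_enveloping (c : 'I_n -> 'I_n -> 'I_n -> k) (U : algType k)
  (xh : 'I_n -> U) : Prop :=
  lie_rel c xh /\
  forall (B : algType k) (f : 'I_n -> B), lie_rel c f ->
    exists! g : (U -> B), is_alg_morph g /\ forall i, g (xh i) = f i.

(* ---------- Formal power series  hatS(g^dual) = k[[d^1..d^n]] ---------- *)
Definition pser := multinom n -> k.
Definition padd (f g : pser) : pser := fun m => f m + g m.
Definition pscale (a : k) (f : pser) : pser := fun m => a * f m.
Definition pmul (f g : pser) : pser := fun m =>
  \sum_(a : 'X_{1..n < (mdeg m).+1} | (bmnm a <= m)%MM)
     f (bmnm a) * g (m - bmnm a)%MM.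
Definition pgen (j : 'I_n) : pser := fun m => (m == U_(j)%MM)%:R.

Definition is_derivation (D : pser -> pser) : Prop :=
  [/\ forall f g, D (padd f g) = padd (D f) (D g),
      forall a f, D (pscale a f) = pscale a (D f) &
      forall f g, D (pmul f g) = padd (pmul (D f) g) (pmul f (D g))].

(* phiD i = phi(xhat_i); phi : g -> Der(hatS(g^dual)) is a Lie algebra map. *)
Definition is_lie_hom_der (c : 'I_n -> 'I_n -> 'I_n -> k)
  (phiD : 'I_n -> pser -> pser) : Prop :=
  (forall i, is_derivation (phiD i)) /\
  (forall i j f m, phiD i (phiD j f) m - phiD j (phiD i f) m
                   = \sum_(l < n) c i j l * phiD l f m).

Definition phi_coef (phiD : 'I_n -> pser -> pser) (j i : 'I_n) : pser :=
  fun m => - phiD i (pgen j) m.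

(* action on S(g) of the series sum_m a_m d^m (d^j acting as d/dx_j) *)
Definition dop (a : pser) (P : {mpoly k[n]}) : {mpoly k[n]} :=
  \sum_(m : 'X_{1..n < msize P}) a (bmnm m) *: P^`M[bmnm m].

(* action on S(g) of  sum_j x_j phi^j_i  in the semicompleted Weyl algebra *)
Definition opx (phiD : 'I_n -> pser -> pser) (i : 'I_n) (P : {mpoly k[n]})
  : {mpoly k[n]} := \sum_(j < n) 'X_j * dop (phi_coef phiD j i) P.

(* rho u = the operator by which u^phi acts on S(g); rho is the algebra map
   U(g) -> End_k(S(g)) determined by xhat_i |-> sum_j x_j phi^j_i. *)
Definition is_phi_action (U : algType k) (xh : 'I_n -> U)
  (phiD : 'I_n -> pser -> pser) (rho : U -> {mpoly k[n]} -> {mpoly k[n]})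
  : Prop :=
  [/\ forall u v P, rho (u + v) P = rho u P + rho v P,
      forall (a : k) u P, rho (a *: u) P = a *: rho u P,
      forall u v P, rho (u * v) P = rho u (rho v P),
      forall P, rho 1 P = P &
      forall i P, rho (xh i) P = opx phiD i P].

(* hat d^j := xi o d/dx_j o xi^{-1}, where xi^{-1} u = u^phi |> 1 = rho u 1 *)
Definition hatpartial (U : algType k)
  (rho : U -> {mpoly k[n]} -> {mpoly k[n]}) (xi : {mpoly k[n]} -> U)
  (j : 'I_n) (u : U) : U := xi ((rho u 1)^`M(j)).

(* ---------- Exterior algebra Lambda^*(g): coordinates in the basis
   dx_I = dx_{i1} /\ ... /\ dx_{ir}, I = {i1 < ... < ir}. ---------- *)
Definition Lam := {ffun {set 'I_n} -> k^o}.

Definition wedge_dx (j : 'I_n) (w : Lam) : Lam :=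
  [ffun J : {set 'I_n} => if j \in J then
      (-1) ^+ #|[set i in J | (i < j)%N]| * w (J :\ j) else 0].

(* elements are finite sums of elementary tensors, and two such sums are equal
   in the tensor product iff every trilinear map agrees on them. *)
Definition tens (U : algType k) := seq (Lam * U * pser).

Definition trilinear (U : algType k) (W : lmodType k)
  (f : Lam -> U -> pser -> W) : Prop :=
  [/\ forall (a : k) (w1 w2 : Lam) u P, f (a *: w1 + w2) u P = a *: f w1 u P + f w2 u P,
      forall (a : k) w (u1 u2 : U) P, f w (a *: u1 + u2) P = a *: f w u1 P + f w u2 P &
      forall (a : k) w u P1 P2, f w u (padd (pscale a P1) P2)
                          = a *: f w u P1 + f w u P2].

Definition tens_eq (U : algType k) (t1 t2 : tens U) : Prop :=
  forall (W : lmodType k) (f : Lam -> U -> pser -> W), trilinear f ->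
    \sum_(x <- t1) f x.1.1 x.1.2 x.2 = \sum_(x <- t2) f x.1.1 x.1.2 x.2.

Definition dhat (U : algType k) (rho : U -> {mpoly k[n]} -> {mpoly k[n]})
  (xi : {mpoly k[n]} -> U) (t : tens U) : tens U :=
  flatten [seq [seq (wedge_dx j x.1.1, hatpartial rho xi j x.1.2, x.2)
               | j <- enum 'I_n] | x <- t].

End Twisted.

From HB Require Import structures.
From mathcomp Require Import all_boot all_order all_algebra.
From mathcomp Require Import mpoly.
Import GRing.Theory.
Local Open Scope ring_scope.

(* The operators dx_j /\ _ anticommute, while the hat d^j commute, being
   conjugate by xi to the partial derivatives d/dx_j.  Hence in
   dhat (dhat (w (x) u (x) P)) = sum_(j,l) dx_l /\ dx_j /\ w (x) hat d^l hat d^j u (x) P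
   the (j,l) and (l,j) terms cancel (the diagonal terms are their own
   negatives), and 2 is invertible in characteristic zero.  The Lie structure
   and phi are only needed for xi to exist; the identity itself uses nothing
   beyond xi being inverse to u |-> u^phi |> 1. *)

Section Wedge.
Variables (n : nat) (k : fieldType).

Lemma wedge_dx_id (j : 'I_n) (w : Lam n k) : wedge_dx j (wedge_dx j w) = 0.
Proof.
by apply/ffunP => J; rewrite !ffunE in_setD1 eqxx /=; case: ifP; rewrite ?mulr0.
Qed.

Lemma wedge_dxC_lt {j l : 'I_n} (w : Lam n k) : (j < l)%N ->
  wedge_dx l (wedge_dx j w) = - wedge_dx j (wedge_dx l w).
Proof.
move=> jl; have njl : j != l by rewrite neq_ltn jl.
apply/ffunP => J; rewrite !ffunE !in_setD1 (negbTE njl) eq_sym (negbTE njl) /=.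
case jJ: (j \in J); case lJ: (l \in J) => /=; rewrite ?mulr0 ?oppr0 //.
have -> : J :\ l :\ j = J :\ j :\ l by apply/setP => x; rewrite !in_setD1 andbCA.
(* removing l > j does not change the count of indices below j, while removing
   j < l lowers the count of indices below l by one: this is the sign flip *)
have -> : [set i in J :\ l | (i < j)%N] = [set i in J | (i < j)%N].
  apply/setP => x; rewrite !inE; case: (eqVneq x l) => // ->.
  by rewrite lJ /= ltnNge (ltnW jl).
have -> : #|[set i in J | (i < l)%N]| = #|[set i in J :\ j | (i < l)%N]|.+1.
  rewrite (cardsD1 j) !inE jJ jl /=; congr (_.+1); apply: eq_card => x.
  by rewrite !inE; case: (x \in J); case: (x == j).
by rewrite exprS !mulN1r !mulNr mulrCA.
Qed.

Lemma wedge_dxC (j l : 'I_n) (w : Lam n k) :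
  wedge_dx l (wedge_dx j w) = - wedge_dx j (wedge_dx l w).
Proof.
case: (ltngtP j l) => [jl | lj | /val_inj ->]; first exact: wedge_dxC_lt.
  by rewrite (wedge_dxC_lt w lj) opprK.
by rewrite wedge_dx_id oppr0.
Qed.

End Wedge.

Lemma trilinearNl {n : nat} {k : fieldType} {U : algType k} {W : lmodType k}
    {f : Lam n k -> U -> pser n k -> W} :
  trilinear f -> forall w u P, f (- w) u P = - f w u P.
Proof.
case=> f_linl _ _ w u P.
have f0 : f 0 u P = 0.
  apply: (addrI (f 0 u P)); rewrite addr0.
  by have := f_linl 1 0 0 u P; rewrite !scale1r addr0.
by have := f_linl (-1) w 0 u P; rewrite !addr0 f0 addr0 !scaleN1r.
Qed.

Lemma sum_antisym_eq0 (k : fieldType) (W : lmodType k) (I : finType)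
    (F : I -> I -> W) : (2%:R : k) != 0 ->
  (forall i j, F i j = - F j i) -> \sum_i \sum_j F i j = 0.
Proof.
move=> two_neq0 F_antisym; set S := \sum_i _.
have S_opp : S = - S.
  by rewrite [in LHS]/S exchange_big -sumrN; apply: eq_bigr => i _;
    rewrite -sumrN; apply: eq_bigr => j _.
have : (2%:R : k) *: S = 0 by rewrite scaler_nat mulr2n {1}S_opp addNr.
by move/(congr1 (fun z => (2%:R : k)^-1 *: z));
  rewrite scalerA mulVf // scale1r scaler0.
Qed.

Section TwistedDerivative.
Context {n : nat} {k : fieldType} {U : algType k}.
Variables (rho : U -> {mpoly k[n]} -> {mpoly k[n]}) (xi : {mpoly k[n]} -> U).
Hypothesis xiK : cancel xi (fun u => rho u 1).

Lemma hatpartialC (j l : 'I_n) (u : U) :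
  hatpartial rho xi l (hatpartial rho xi j u)
  = hatpartial rho xi j (hatpartial rho xi l u).
Proof. by rewrite /hatpartial !xiK mderiv_comm. Qed.

Lemma dhat_cat (t1 t2 : tens n U) :
  dhat rho xi (t1 ++ t2) = dhat rho xi t1 ++ dhat rho xi t2.
Proof. by rewrite /dhat map_cat flatten_cat. Qed.

Lemma dhat_cons (x : Lam n k * U * pser n k) (t : tens n U) :
  dhat rho xi (x :: t) = dhat rho xi [:: x] ++ dhat rho xi t.
Proof. by rewrite /dhat /= cats0. Qed.

Lemma dhat2_elem_eq0 (W : lmodType k) (f : Lam n k -> U -> pser n k -> W) :
    (2%:R : k) != 0 -> trilinear f ->
  forall w u P, \sum_(x <- dhat rho xi (dhat rho xi [:: (w, u, P)]))
                   f x.1.1 x.1.2 x.2 = 0.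
Proof.
move=> two_neq0 f_tri w u P.
rewrite {2}/dhat /= cats0 /dhat -map_comp big_flatten big_map big_enum /=.
under eq_bigr => j _ do rewrite big_map big_enum /=.
apply: sum_antisym_eq0 => // j l.
by rewrite wedge_dxC (trilinearNl f_tri) hatpartialC.
Qed.

End TwistedDerivative.

Theorem theorem3p4 (k : fieldType) (n : nat)
  (Hchar : [pchar k] =i pred0)
  (c : 'I_n -> 'I_n -> 'I_n -> k) (Hlie : is_lie_structure c)
  (U : algType k) (xh : 'I_n -> U) (HU : is_enveloping c xh)
  (phiD : 'I_n -> pser n k -> pser n k) (Hphi : is_lie_hom_der c phiD)
  (Hid : forall i j : 'I_n, phi_coef phiD j i 0%MM = (i == j)%:R)
  (rho : U -> {mpoly k[n]} -> {mpoly k[n]}) (Hrho : is_phi_action xh phiD rho)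
  (xi : {mpoly k[n]} -> U)
  (Hxi1 : cancel (fun u => rho u 1) xi)
  (Hxi2 : cancel xi (fun u => rho u 1)) :
  forall t : tens n U, tens_eq (dhat rho xi (dhat rho xi t)) [::].
Proof.
move=> t W f f_tri; rewrite big_nil.
have two_neq0 : (2%:R : k) != 0 by rewrite (pcharf0P k).1.
elim: t => [|x t IH]; first by rewrite big_nil.
rewrite dhat_cons dhat_cat big_cat /= IH addr0.
by case: x => [[w u] P]; apply: dhat2_elem_eq0.
Qed.
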